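(* Let $A\in\mathcal{PM}(n)$. A row vector $v\in\{0,1\}^n$ is a poset vector of $A$ if and only if $vA=v$, where the product is the Boolean matrix product. Equivalently, the set of order ideals of $P_A$ equals $\{\mathrm{supp}(v): v\in\{0,1\}^n,\ vA=v\}$.
   Context: Let $X_n=\{0,1,\ldots,n-1\}$. A naturally labeled (NL) poset on $X_n$ is a partial order $\preceq$ on $X_n$ such that $x\preceq y$ implies $x\le y$ in the usual integer order. Its poset matrix is the $n\times n$ $(0,1)$-matrix $A=(a_{i,j})_{i,j\in X_n}$ with $a_{i,j}=1$ if $j\preceq i$ and $0$ otherwise; $\mathcal{PM}(n)$ is the set of all such matrices and $P_A$ the NL poset with poset matrix $A$. Boolean arithmetic: $1+1=1$, so $(vA)_j=\max_i v_ia_{i,j}$. For $v\in\{0,1\}^n$, $A^v=\begin{bmatrix}A&\mathbf{0}\\ v&1\end{bmatrix}$, and $v$ is a poset vector of $A$ if $A^v\in\mathcal{PM}(n+1)$. $\mathrm{supp}(v)=\{j: v_j=1\}$; an order ideal is a downward closed subset. *)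

(* Boolean (0,1)-matrices are 'M[bool]_(m,n); true = 1, false = 0. *)
From mathcomp Require Import all_boot all_algebra.
Set Implicit Arguments. Unset Strict Implicit. Unset Printing Implicit Defensive.

Definition bmulmx (m k p : nat) (B : 'M[bool]_(m, k)) (C : 'M[bool]_(k, p))
  : 'M[bool]_(m, p) := \matrix_(i, j) [exists l, B i l && C l j].

(* A is the poset matrix of a naturally labeled poset on X_n:
   the relation  j ⪯ i  :<->  A i j = 1  is a partial order, and
   j ⪯ i implies j <= i. *)
Definition is_poset_matrix (n : nat) (A : 'M[bool]_n) : Prop :=
  [/\ (forall i, A i i),
      (forall i j, A i j -> A j i -> i = j),
      (forall i j k, A i j -> A j k -> A i k)
    & (forall i j : 'I_n, A i j -> (j <= i)%N)].

Definition ext_mx (n : nat) (A : 'M[bool]_n) (v : 'rV[bool]_n) : 'M[bool]_(n + 1) :=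
  block_mx A (const_mx false : 'M[bool]_(n, 1)) v (const_mx true : 'M[bool]_1).

Definition poset_vector (n : nat) (A : 'M[bool]_n) (v : 'rV[bool]_n) : Prop :=
  is_poset_matrix (ext_mx A v).

Definition supp (n : nat) (v : 'rV[bool]_n) : {set 'I_n} := [set j | v ord0 j].

Definition order_ideal (n : nat) (A : 'M[bool]_n) (S : {set 'I_n}) : Prop :=
  forall i j, i \in S -> A i j -> j \in S.

From mathcomp Require Import all_boot all_algebra.

Set Implicit Arguments.
Unset Strict Implicit.
Unset Printing Implicit Defensive.

(* Both conditions say that supp v is an order ideal. For v A = v this holds
   because A is reflexive: (v A)_k = 1 iff k lies below some element of supp v.
   For A^v it holds because the new point n is above exactly supp v, so
   transitivity through n is downward closure, while reflexivity, antisymmetry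
   and the natural labelling at n are automatic. *)

Lemma split_ord_ind (n : nat) (P : 'I_(n + 1) -> Prop) :
  (forall j : 'I_n, P (lshift 1 j)) -> P (rshift n ord0) -> forall i, P i.
Proof.
move=> Pl Pr i; rewrite -(splitK i); case: (split i) => [j|k] /=; first exact: Pl.
by rewrite (ord1 k).
Qed.

Section PosetVectors.

Variables (n : nat) (A : 'M[bool]_n).

Lemma bmulmx_fixedP (v : 'rV[bool]_n) :
  (forall i, A i i) -> bmulmx v A = v <-> order_ideal A (supp v).
Proof.
move=> reflA; split=> [fixv j k | ideal].
  rewrite !inE => vj Ajk.
  by rewrite -fixv mxE; apply/existsP; exists j; rewrite vj.
apply/matrixP => i k; rewrite mxE (ord1 i).
apply/existsP/idP => [[j /andP[vj Ajk]] | vk].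
  by have := ideal j k; rewrite !inE; apply.
by exists k; rewrite vk reflA.
Qed.

Let ext_mxE := (block_mxEul, block_mxEur, block_mxEdl, block_mxEdr, mxE).

Lemma poset_vectorP (v : 'rV[bool]_n) :
  is_poset_matrix A -> poset_vector A v <-> order_ideal A (supp v).
Proof.
case=> reflA antiA transA labelA; split.
  case=> _ _ transAv _ j k; rewrite !inE => vj Ajk.
  have := transAv (rshift n ord0) (lshift 1 j) (lshift 1 k).
  by rewrite /ext_mx !ext_mxE; apply.
move=> ideal; split.
- by apply: split_ord_ind => [j|]; rewrite /ext_mx ?ext_mxE.
- apply: split_ord_ind => [i|]; apply: split_ord_ind => [j|];
    rewrite /ext_mx ?ext_mxE // => Aij Aji.
  by rewrite (antiA _ _ Aij Aji).
- apply: split_ord_ind => [i|]; apply: split_ord_ind => [j|];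
    apply: split_ord_ind => [k|]; rewrite /ext_mx ?ext_mxE //.
  + exact: transA.
  + by move=> vj Ajk; have := ideal j k; rewrite !inE; apply.
- apply: split_ord_ind => [i|]; apply: split_ord_ind => [j|];
    rewrite /ext_mx ?ext_mxE //=.
  + exact: labelA.
  + by rewrite addn0 => _; apply: ltnW.
Qed.

End PosetVectors.

Lemma supp_indicator (n : nat) (S : {set 'I_n}) : supp (\row_j (j \in S)) = S.
Proof. by apply/setP => j; rewrite inE mxE. Qed.

Theorem theorem5p3 (n : nat) (A : 'M[bool]_n) :
  is_poset_matrix A ->
  (forall v : 'rV[bool]_n, poset_vector A v <-> bmulmx v A = v) /\
  (forall S : {set 'I_n},
      order_ideal A S <-> exists v : 'rV[bool]_n, bmulmx v A = v /\ S = supp v).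
Proof.
move=> posetA; have reflA : forall i, A i i by case: posetA.
split=> [v | S].
  exact: (iff_trans (poset_vectorP v posetA) (iff_sym (bmulmx_fixedP v reflA))).
split=> [idealS | [v [/(bmulmx_fixedP v reflA) idealv ->]] //].
exists (\row_j (j \in S))%R; rewrite supp_indicator; split=> //.
by apply/bmulmx_fixedP; rewrite ?supp_indicator.
Qed.
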